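(* Let $G$ be any graph without isolated vertices. If $f=(V_0,V_1,V_2)$ is a $\gamma_{qtR}(G)$-function and $V_{1,2}^*=\{v\in V_1: N(v)\cap V_2\neq\emptyset\}$, then $$\gamma(G)+|V_2|+|V_{1,2}^*|\le \gamma_{qtR}(G)\le 3\gamma(G).$$
   Context: All graphs are finite, simple and undirected; $N(v)$ is the open neighborhood of $v$ and $\gamma(G)$ the domination number. For $f:V(G)\to\{0,1,2\}$ write $V_i=\{v:f(v)=i\}$ and $f=(V_0,V_1,V_2)$; weight $\omega(f)=|V_1|+2|V_2|$. A quasi-total Roman dominating function (QTRDF) is an $f$ such that every vertex labeled $0$ is adjacent to a vertex labeled $2$, and every vertex isolated in the subgraph induced by $V_1\cup V_2$ has label $1$; $\gamma_{qtR}(G)$ is the minimum weight of a QTRDF, and a $\gamma_{qtR}(G)$-function is a QTRDF of weight $\gamma_{qtR}(G)$. *)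

From mathcomp Require Import all_boot all_order.
Set Implicit Arguments. Unset Strict Implicit. Unset Printing Implicit Defensive.

Section Graph.
Variables (T : finType) (e : rel T).

Definition nbhd (v : T) : {set T} := [set u | e v u].

Definition simple_graph := symmetric e /\ irreflexive e.

Definition no_isolated := forall v : T, exists u, e v u.

Definition dominating (D : {set T}) : bool :=
  [forall v, (v \in D) || [exists u in D, e v u]].

(* domination number; setT is dominating, so the default #|T| is harmless *)
Definition gamma : nat := \big[minn/#|T|]_(D : {set T} | dominating D) #|D|.

Definition Vi (f : {ffun T -> 'I_3}) (i : nat) : {set T} := [set v | nat_of_ord (f v) == i].

Definition weight (f : {ffun T -> 'I_3}) : nat := #|Vi f 1| + 2 * #|Vi f 2|.

Definition qtrdf (f : {ffun T -> 'I_3}) : bool :=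
  [forall v, (v \in Vi f 0) ==> [exists u in Vi f 2, e v u]] &&
  [forall v, ((v \in Vi f 1 :|: Vi f 2) &&
              ~~ [exists u in Vi f 1 :|: Vi f 2, e v u]) ==> (v \in Vi f 1)].

(* the all-1 function is a QTRDF of weight #|T|, so the default is harmless *)
Definition gamma_qtR : nat := \big[minn/(2 * #|T|)]_(f | qtrdf f) weight f.

Definition gamma_qtR_function (f : {ffun T -> 'I_3}) : Prop :=
  qtrdf f /\ weight f = gamma_qtR.

Definition V12star (f : {ffun T -> 'I_3}) : {set T} :=
  [set v in Vi f 1 | [exists u in Vi f 2, e v u]].

End Graph.

(* For a QTRDF f, the set V2 together with the vertices of V1 having no neighbour in V2
   is dominating: a 0 sees a 2, and a 1 outside it sees a 2 by definition of V*_{1,2}.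
   It has at most |V2| + |V1| - |V*_{1,2}| vertices, which gives the lower bound.
   Conversely, from a dominating set D, label D by 2 and the remaining vertices of a
   choice of one neighbour per vertex of D by 1: every 0 sees D, no vertex of D is
   isolated in V1 u V2, and the weight is at most 3|D|. *)
From mathcomp Require Import all_boot all_order.
From mathcomp Require Import zify.
Import Order.TTheory.

Set Implicit Arguments.
Unset Strict Implicit.
Unset Printing Implicit Defensive.

Section QuasiTotalRomanDomination.
Variables (T : finType) (e : rel T).

Lemma gamma_le (D : {set T}) : dominating e D -> gamma e <= #|D|.
Proof. exact: (bigmin_le_cond _ (fun A : {set T} => #|A|)). Qed.

Lemma gamma_attained : exists2 D : {set T}, dominating e D & #|D| = gamma e.
Proof.
have domT : dominating e setT by apply/forallP => v; rewrite in_setT.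
have [D domD gammaE] :=
  eq_bigmin [set: T] _ (fun A : {set T} => #|A|) domT (fun A _ => max_card A).
by exists D => //; exact: esym gammaE.
Qed.

Lemma gamma_qtR_le (f : {ffun T -> 'I_3}) : qtrdf e f -> gamma_qtR e <= weight f.
Proof. exact: (bigmin_le_cond _ (@weight T)). Qed.

Lemma Vi_cases (f : {ffun T -> 'I_3}) (v : T) :
  [|| v \in Vi f 0, v \in Vi f 1 | v \in Vi f 2].
Proof. by rewrite !inE; case: (f v) => [[|[|[|n]]]]. Qed.

Lemma V12star_sub (f : {ffun T -> 'I_3}) : V12star e f \subset Vi f 1.
Proof. by apply/subsetP => v; rewrite inE => /andP []. Qed.

Lemma qtrdf_dominating (f : {ffun T -> 'I_3}) :
  qtrdf e f -> dominating e (Vi f 2 :|: (Vi f 1 :\: V12star e f)).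
Proof.
case/andP=> /forallP zero_sees_two _; apply/forallP => v.
have sees_two : [exists u in Vi f 2, e v u] ->
    [exists u in Vi f 2 :|: (Vi f 1 :\: V12star e f), e v u].
  by case/existsP=> u /andP [u2 evu]; apply/existsP; exists u; rewrite in_setU u2.
case/or3P: (Vi_cases f v) => [v0 | v1 | v2].
- by rewrite sees_two ?orbT //; exact: implyP (zero_sees_two v) v0.
- case: (boolP (v \in V12star e f)) => [|vN12].
    by rewrite inE => /andP [_ /sees_two ->]; rewrite orbT.
  by rewrite in_setU in_setD vN12 v1 orbT.
- by rewrite in_setU v2.
Qed.

Lemma gamma_add_le_weight (f : {ffun T -> 'I_3}) :
  qtrdf e f -> gamma e + #|Vi f 2| + #|V12star e f| <= weight f.
Proof.
move=> qf; set D := Vi f 2 :|: (Vi f 1 :\: V12star e f).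
have gammaD : gamma e <= #|D| := gamma_le (qtrdf_dominating qf).
have cardD : #|D| <= #|Vi f 2| + (#|Vi f 1| - #|V12star e f|).
  apply: leq_trans (leq_card_setU _ _) _.
  by rewrite cardsD (setIidPr (V12star_sub f)).
have := subset_leq_card (V12star_sub f); rewrite /weight; lia.
Qed.

Hypothesis nonisolated : no_isolated e.

Definition partner (v : T) : T := xchoose (nonisolated v).

Lemma edge_partner (v : T) : e v (partner v).
Proof. exact: xchooseP. Qed.

Definition dominating_labeling (D : {set T}) : {ffun T -> 'I_3} :=
  [ffun v => if v \in D then inord 2 else if v \in partner @: D then inord 1 else ord0].

Lemma dominating_labelingE (D : {set T}) (v : T) :
  nat_of_ord (dominating_labeling D v) =
  if v \in D then 2 else if v \in partner @: D then 1 else 0.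
Proof. by rewrite ffunE; case: ifP => _; [|case: ifP => _]; rewrite ?inordK. Qed.

Lemma Vi_dominating_labeling2 (D : {set T}) : Vi (dominating_labeling D) 2 = D.
Proof.
apply/setP => v; rewrite inE dominating_labelingE.
by case: (v \in D); [|case: ifP].
Qed.

Lemma Vi_dominating_labeling1 (D : {set T}) :
  Vi (dominating_labeling D) 1 \subset partner @: D.
Proof.
apply/subsetP => v; rewrite inE dominating_labelingE.
by case: (v \in D) => //; case: ifP.
Qed.

Lemma qtrdf_dominating_labeling (D : {set T}) :
  dominating e D -> qtrdf e (dominating_labeling D).
Proof.
move=> /forallP domD.
apply/andP; split; apply/forallP => v; apply/implyP.
- rewrite inE dominating_labelingE Vi_dominating_labeling2.
  by case: (boolP (v \in D)) (domD v) => [//| _ /= ->].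
- case/andP=> v12 v_isolated; apply: contraNT v_isolated => v1.
  have vD : v \in D.
    by move: v12; rewrite in_setU (negbTE v1) Vi_dominating_labeling2.
  apply/existsP; exists (partner v); rewrite edge_partner andbT !inE.
  by rewrite !dominating_labelingE imset_f //; case: ifP.
Qed.

Lemma weight_dominating_labeling (D : {set T}) :
  weight (dominating_labeling D) <= 3 * #|D|.
Proof.
rewrite /weight Vi_dominating_labeling2.
have := leq_trans (subset_leq_card (Vi_dominating_labeling1 D))
                  (leq_imset_card partner D).
lia.
Qed.

Lemma gamma_qtR_le_3gamma : gamma_qtR e <= 3 * gamma e.
Proof.
have [D domD <-] := gamma_attained.
exact: leq_trans (gamma_qtR_le (qtrdf_dominating_labeling domD))
                 (weight_dominating_labeling D).
Qed.

End QuasiTotalRomanDomination.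

Theorem mainTheorem3 (T : finType) (e : rel T) (f : {ffun T -> 'I_3}) :
  simple_graph e -> no_isolated e -> gamma_qtR_function e f ->
  gamma e + #|Vi f 2| + #|V12star e f| <= gamma_qtR e /\ gamma_qtR e <= 3 * gamma e.
Proof.
move=> _ nonisolated [qf weightE]; split.
  by rewrite -weightE; exact: gamma_add_le_weight.
exact: gamma_qtR_le_3gamma nonisolated.
Qed.
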